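(* Let $n_0,n_1,n_\infty$ be integers with $1\le n_0\le n_1\le n_\infty$, $n=n_0+n_1+n_\infty$, and let $\mathcal{S}_{\mathrm{reg}}=\{(\xi,\eta)\in\mathbb{C}^2 : \eta^n=\xi^{n-n_0}(1-\xi)^{n-n_1}\}\setminus\{(0,0),(1,0)\}$ with the Riemannian metric $\Gamma=\frac{1}{\eta}\,d\xi\odot\frac{1}{\overline{\eta}}\,\overline{d\xi}$. Let $X$ be the holomorphic vector field on $\mathcal{S}_{\mathrm{reg}}$ given by $$X(\xi,\eta)=\eta\frac{\partial}{\partial\xi}+\frac{n-n_0}{n}\,\frac{\xi^{n-n_0-1}(1-\xi)^{n-n_1-1}\bigl(1-\frac{2n-n_0-n_1}{n-n_0}\xi\bigr)}{\eta^{n-2}}\frac{\partial}{\partial\eta}.$$ Then $X$ is the geodesic vector field for the flat Riemannian metric $\Gamma$ on $\mathcal{S}_{\mathrm{reg}}$, i.e. its (real-time) integral curves are geodesics of $(\mathcal{S}_{\mathrm{reg}},\Gamma)$.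
   Context: $X$ is tangent to $\mathcal{S}_{\mathrm{reg}}$ at every point and nowhere vanishing. A holomorphic vector field is regarded as a real vector field on the underlying real surface in the usual way. *)

From Stdlib Require Import Reals.
From Coquelicot Require Import Coquelicot.
Open Scope R_scope.

Fixpoint Cpown (z : C) (k : nat) : C :=
  match k with O => RtoC 1 | S k' => Cmult z (Cpown z k') end.

(* A metric is given by its coefficient functions g i j (x0,x1),       *)
(* i,j in {0,1} (other indices unused).                               *)
Definition sum2 (f : nat -> R) : R := f 0%nat + f 1%nat.

Definition pd (l : nat) (f : R -> R -> R) (x y : R) : R :=
  match l with
  | O => Derive (fun s => f s y) x
  | _ => Derive (fun s => f x s) y
  end.

Definition gdet (g : nat -> nat -> R -> R -> R) (x y : R) : R :=
  g 0%nat 0%nat x y * g 1%nat 1%nat x y - g 0%nat 1%nat x y * g 1%nat 0%nat x y.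

Definition ginv (g : nat -> nat -> R -> R -> R) (k l : nat) (x y : R) : R :=
  match k, l with
  | O, O => g 1%nat 1%nat x y / gdet g x y
  | O, _ => - g 0%nat 1%nat x y / gdet g x y
  | _, O => - g 1%nat 0%nat x y / gdet g x y
  | _, _ => g 0%nat 0%nat x y / gdet g x y
  end.

Definition christoffel (g : nat -> nat -> R -> R -> R) (k i j : nat) (x y : R) : R :=
  / 2 * sum2 (fun l => ginv g k l x y *
     (pd i (g j l) x y + pd j (g i l) x y - pd l (g i j) x y)).

Definition is_geodesic_chart (g : nat -> nat -> R -> R -> R)
    (c : nat -> R -> R) (a b : R) : Prop :=
  forall t, a < t < b ->
    (forall k, ex_derive (c k) t /\ ex_derive (Derive (c k)) t) /\
    (forall k, (k < 2)%nat ->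
       Derive (Derive (c k)) t
       + sum2 (fun i => sum2 (fun j =>
           christoffel g k i j (c 0%nat t) (c 1%nat t)
           * Derive (c i) t * Derive (c j) t)) = 0).

Definition nsum (n0 n1 ninf : nat) : nat := (n0 + n1 + ninf)%nat.

Definition S_reg (n0 n1 ninf : nat) (p : C * C) : Prop :=
  let n := nsum n0 n1 ninf in
  let (xi, eta) := p in
  Cpown eta n = Cmult (Cpown xi (n - n0)) (Cpown (Cminus (RtoC 1) xi) (n - n1))
  /\ p <> (RtoC 0, RtoC 0) /\ p <> (RtoC 1, RtoC 0).

Definition X_xi (p : C * C) : C := snd p.

Definition X_eta (n0 n1 ninf : nat) (p : C * C) : C :=
  let n := nsum n0 n1 ninf in
  let (xi, eta) := p in
  Cdiv
    (Cmult (RtoC (INR (n - n0) / INR n))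
      (Cmult (Cpown xi (n - n0 - 1))
        (Cmult (Cpown (Cminus (RtoC 1) xi) (n - n1 - 1))
          (Cminus (RtoC 1)
             (Cmult (RtoC (INR (2 * n - n0 - n1) / INR (n - n0))) xi)))))
    (Cpown eta (n - 2)).

(* The metric Gamma = (1/eta) dxi . (1/conj eta) conj(dxi) in the
   (everywhere valid, since eta <> 0 on S_reg) chart xi = x0 + i x1:
   Gamma = |eta|^{-2} (dx0^2 + dx1^2), and on S_reg
   |eta|^{-2} = |xi|^{-2(n-n0)/n} |1-xi|^{-2(n-n1)/n}. *)
Definition conf_factor (n0 n1 ninf : nat) (x y : R) : R :=
  let n := nsum n0 n1 ninf in
  Rpower (Cmod (x, y)) (- 2 * INR (n - n0) / INR n)
  * Rpower (Cmod (Cminus (RtoC 1) (x, y))) (- 2 * INR (n - n1) / INR n).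

Definition Gamma_chart (n0 n1 ninf : nat) (i j : nat) (x y : R) : R :=
  if Nat.eqb i j then conf_factor n0 n1 ninf x y else 0.

Definition is_geodesic_S (n0 n1 ninf : nat) (gam : R -> C * C) (a b : R) : Prop :=
  (forall t, a < t < b -> S_reg n0 n1 ninf (gam t)) /\
  (forall t, a < t < b -> continuous (fun s => fst (gam s)) t
                         /\ continuous (fun s => snd (gam s)) t) /\
  is_geodesic_chart (Gamma_chart n0 n1 ninf)
    (fun k s => match k with O => Re (fst (gam s)) | _ => Im (fst (gam s)) end) a b.

Definition is_integral_curve_X (n0 n1 ninf : nat) (gam : R -> C * C) (a b : R) : Prop :=
  forall t, a < t < b ->
    S_reg n0 n1 ninf (gam t) /\
    is_derive (fun s => Re (fst (gam s))) t (Re (X_xi (gam t))) /\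
    is_derive (fun s => Im (fst (gam s))) t (Im (X_xi (gam t))) /\
    is_derive (fun s => Re (snd (gam s))) t (Re (X_eta n0 n1 ninf (gam t))) /\
    is_derive (fun s => Im (snd (gam s))) t (Im (X_eta n0 n1 ninf (gam t))).

From Stdlib Require Import Reals Lra Lia.
From Coquelicot Require Import Coquelicot.
Open Scope R_scope.

(* On S_reg one has eta <> 0 and |eta|^2n = |xi|^2(n-n0) |1-xi|^2(n-n1), so Gamma is the
   conformal metric e^phi |dxi|^2 with phi = - A log|xi|^2 - B log|1-xi|^2, A = (n-n0)/n,
   B = (n-n1)/n.  For a conformal metric e^phi |dz|^2 the geodesic equations say
   z'' + (d phi/dz) z'^2 = 0, and here d phi/dz = B/(1-xi) - A/xi.  Using the equation of
   the curve to eliminate the powers of xi, 1-xi and eta, the second component of X is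
   exactly -(d phi/dz)(xi) eta^2, so along an integral curve xi' = eta and
   xi'' = eta' = -(d phi/dz) xi'^2. *)

Definition conformal_metric (f : R -> R -> R) (i j : nat) (x y : R) : R :=
  if Nat.eqb i j then f x y else 0.

Definition chart_coords (z : C) (k : nat) : R :=
  match k with O => Re z | _ => Im z end.

Definition chart_curve (z : R -> C) (k : nat) (s : R) : R := chart_coords (z s) k.

(* [w] is the Wirtinger derivative [d/dz log f] at [z]. *)
Definition is_dz_log (f : R -> R -> R) (w z : C) : Prop :=
  f (Re z) (Im z) <> 0 /\
  pd 0 f (Re z) (Im z) = 2 * f (Re z) (Im z) * Re w /\
  pd 1 f (Re z) (Im z) = - 2 * f (Re z) (Im z) * Im w.

Lemma is_dz_log_ext (f g : R -> R -> R) (w z : C) :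
  (forall x y, f x y = g x y) -> is_dz_log g w z -> is_dz_log f w z.
Proof.
  intros Efg (Hg & Hg0 & Hg1); unfold is_dz_log, pd in *.
  rewrite (Derive_ext (fun s => f s (Im z)) (fun s => g s (Im z))) by auto.
  rewrite (Derive_ext (fun s => f (Re z) s) (fun s => g (Re z) s)) by auto.
  rewrite !Efg; auto.
Qed.

Lemma conformal_christoffel_contraction (f : R -> R -> R) (w z : C) (d : nat -> R)
    (k : nat) :
  is_dz_log f w z -> (k < 2)%nat ->
  sum2 (fun i => sum2 (fun j =>
    christoffel (conformal_metric f) k i j (Re z) (Im z) * d i * d j))
  = chart_coords (w * (d 0%nat, d 1%nat) * (d 0%nat, d 1%nat))%C k.
Proof.
  destruct z as [x y]; intros (Hf & Hx & Hy) Hk; unfold pd in Hx, Hy; simpl in *.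
  unfold christoffel, sum2, ginv, gdet, pd, conformal_metric; simpl.
  rewrite !Derive_const, Hx, Hy.
  destruct w as [p q]; destruct k as [|[|k]]; [..| lia]; simpl; field; exact Hf.
Qed.

Lemma is_derive_Derive_on_interval (x u : R -> R) (a b t l : R) :
  (forall s, a < s < b -> is_derive x s (u s)) -> a < t < b ->
  is_derive u t l -> is_derive (Derive x) t l.
Proof.
  intros Hx Ht. apply is_derive_ext_loc.
  apply (filter_imp (fun s => a < s < b)).
  - intros s Hs. symmetry. apply is_derive_unique, Hx, Hs.
  - exact (@open_and R_UniformSpace _ _ (open_gt a) (open_lt b) t Ht).
Qed.

Lemma is_geodesic_chart_conformal (f : R -> R -> R) (w : C -> C) (z v acc : R -> C)
    (a b : R) :
  (forall t, a < t < b -> is_dz_log f (w (z t)) (z t)) ->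
  (forall t, a < t < b -> forall k,
     is_derive (chart_curve z k) t (chart_coords (v t) k) /\
     is_derive (chart_curve v k) t (chart_coords (acc t) k)) ->
  (forall t, a < t < b -> acc t = (- (w (z t) * v t * v t))%C) ->
  is_geodesic_chart (conformal_metric f) (chart_curve z) a b.
Proof.
  intros Hw Hd Hacc t Ht.
  assert (D1 : forall k, Derive (chart_curve z k) t = chart_coords (v t) k)
    by (intros k; apply is_derive_unique, Hd, Ht).
  assert (D2 : forall k, is_derive (Derive (chart_curve z k)) t (chart_coords (acc t) k)).
  { intros k. apply (is_derive_Derive_on_interval _ (chart_curve v k) a b); auto.
    - intros s Hs. apply Hd, Hs.
    - apply Hd, Ht. }
  split.
  - intros k. split.
    + exists (chart_coords (v t) k). apply Hd, Ht.
    + exists (chart_coords (acc t) k). apply D2.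
  - intros k Hk.
    pose proof (conformal_christoffel_contraction f (w (z t)) (z t)
      (fun i => Derive (chart_curve z i) t) k (Hw t Ht) Hk) as Hc.
    cbv beta in Hc.
    change (chart_curve z 0 t) with (Re (z t)); change (chart_curve z 1 t) with (Im (z t)).
    rewrite Hc, !D1, (is_derive_unique _ _ _ (D2 k)), (Hacc t Ht).
    destruct (v t) as [p q], (w (z t)) as [r s].
    destruct k as [|[|k]]; [..| lia]; simpl; ring.
Qed.

Definition power_factor (A B x y : R) : R :=
  exp (- A * ln (x ^ 2 + y ^ 2) - B * ln ((1 - x) ^ 2 + y ^ 2)).

Definition dz_log_power_factor (A B : R) (z : C) : C := (RtoC B / (1 - z) - RtoC A / z)%C.

Lemma norm2_pos (z : C) : z <> 0%C -> 0 < Re z ^ 2 + Im z ^ 2.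
Proof.
  intros Hz. apply Cmod_gt_0 in Hz. unfold Cmod in Hz.
  destruct (Rle_lt_dec (Re z ^ 2 + Im z ^ 2) 0) as [Hle|]; [|assumption].
  rewrite sqrt_neg_0 in Hz by exact Hle. lra.
Qed.

Lemma is_dz_log_power_factor (A B : R) (z : C) :
  z <> 0%C -> (1 - z)%C <> 0%C ->
  is_dz_log (power_factor A B) (dz_log_power_factor A B z) z.
Proof.
  intros Hz Hz1. apply norm2_pos in Hz, Hz1. destruct z as [x y]; simpl in *.
  split; [apply Rgt_not_eq, exp_pos|]. unfold pd, power_factor, dz_log_power_factor.
  simpl; unfold Rminus.
  split; apply is_derive_unique; auto_derive; try (repeat split; lra).
  all: unfold Cdiv, Cinv, Cminus, Cmult, Cplus, Copp, RtoC; simpl; field; lra.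
Qed.

(* Also valid at [q = 0], where Stdlib's [ln 0] is [0]. *)
Lemma ln_sqrt (q : R) : 0 <= q -> ln (sqrt q) = ln q / 2.
Proof.
  intros Hq. destruct (Req_dec q 0) as [->|Hq0].
  - assert (ln0 : ln 0 = 0)
      by (unfold ln; destruct (Rlt_dec 0 0) as [h|h]; [exfalso; lra|reflexivity]).
    rewrite sqrt_0, ln0. field.
  - assert (Hs : 0 < sqrt q) by (apply sqrt_lt_R0; lra).
    replace (ln q) with (ln (sqrt q * sqrt q)) by (rewrite sqrt_sqrt; lra).
    rewrite ln_mult by exact Hs. field.
Qed.

Definition metric_exponent (n0 n1 ninf k : nat) : R :=
  INR (nsum n0 n1 ninf - k) / INR (nsum n0 n1 ninf).

Lemma conf_factor_power_factor (n0 n1 ninf : nat) (x y : R) :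
  conf_factor n0 n1 ninf x y =
  power_factor (metric_exponent n0 n1 ninf n0) (metric_exponent n0 n1 ninf n1) x y.
Proof.
  unfold conf_factor, power_factor, metric_exponent, Rpower, Cmod; simpl.
  replace ((0 + - y) * ((0 + - y) * 1)) with (y * (y * 1)) by ring.
  replace (1 + - x) with (1 - x) by ring.
  rewrite <- exp_plus, !ln_sqrt
    by (apply Rplus_le_le_0_compat; rewrite Rmult_1_r; apply Rle_0_sqr).
  (* [nsum n0 n1 ninf] may be [0], so its inverse is treated as an opaque factor. *)
  f_equal. unfold Rdiv. generalize (/ INR (nsum n0 n1 ninf)); intros invn. field.
Qed.

Lemma Cpown_Cpow (z : C) (k : nat) : Cpown z k = Cpow z k.
Proof. induction k as [|k IH]; simpl; [reflexivity|now rewrite IH]. Qed.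

Lemma Cmult_integral (z w : C) : (z * w)%C = 0 -> z = 0 \/ w = 0.
Proof.
  intros Hzw. apply (f_equal Cmod) in Hzw. rewrite Cmod_mult, Cmod_0 in Hzw.
  destruct (Rmult_integral _ _ Hzw); [left|right]; now apply Cmod_eq_0.
Qed.

Lemma Cpown_eq0 (z : C) (k : nat) : Cpown z k = 0 -> z = 0.
Proof.
  intros Hz. apply (f_equal Cmod) in Hz. rewrite Cpown_Cpow, Cmod_pow, Cmod_0 in Hz.
  apply Cmod_eq_0. destruct (Req_dec (Cmod z) 0) as [E|E]; [exact E|].
  exfalso. exact (pow_nonzero _ _ E Hz).
Qed.

Lemma Cpown_S_eq0 (k : nat) : Cpown 0 (S k) = 0.
Proof. simpl. ring. Qed.

Lemma curve_point_nonzero (m p q : nat) (xi eta : C) :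
  (0 < m)%nat -> (0 < p)%nat -> (0 < q)%nat ->
  Cpown eta m = (Cpown xi p * Cpown (1 - xi) q)%C ->
  (xi, eta) <> (RtoC 0, RtoC 0) -> (xi, eta) <> (RtoC 1, RtoC 0) ->
  xi <> 0 /\ (1 - xi)%C <> 0 /\ eta <> 0.
Proof.
  intros Hm Hp Hq Heq Hne0 Hne1.
  destruct m as [|m], p as [|p], q as [|q]; try lia.
  assert (eta_of_xi : xi = 0 \/ (1 - xi)%C = 0 -> eta = 0).
  { intros Hxi. apply (Cpown_eq0 _ (S m)). rewrite Heq.
    destruct Hxi as [-> | ->]; rewrite Cpown_S_eq0; ring. }
  assert (xi_of_eta : eta = 0 -> xi = 0 \/ (1 - xi)%C = 0).
  { intros ->. rewrite Cpown_S_eq0 in Heq. symmetry in Heq.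
    destruct (Cmult_integral _ _ Heq) as [H|H]; apply Cpown_eq0 in H; auto. }
  assert (Hxi : xi <> 0) by (intros E; apply Hne0; rewrite E, eta_of_xi; auto).
  assert (Hxi1 : (1 - xi)%C <> 0).
  { intros E. apply Hne1. rewrite eta_of_xi by auto. f_equal.
    replace xi with (1 - (1 - xi))%C by ring. rewrite E. ring. }
  repeat split; auto. intros E. destruct (xi_of_eta E); auto.
Qed.

Lemma S_reg_nonzero (n0 n1 ninf : nat) (xi eta : C) :
  (1 <= n0)%nat -> (1 <= n1)%nat -> S_reg n0 n1 ninf (xi, eta) ->
  xi <> 0 /\ (1 - xi)%C <> 0 /\ eta <> 0.
Proof.
  intros h0 h1 (Heq & Hne0 & Hne1).
  apply (curve_point_nonzero (nsum n0 n1 ninf) (nsum n0 n1 ninf - n0)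
           (nsum n0 n1 ninf - n1)); unfold nsum in *; auto; lia.
Qed.

Lemma X_eta_S_reg (n0 n1 ninf : nat) (xi eta : C) :
  (1 <= n0)%nat -> (1 <= n1)%nat -> S_reg n0 n1 ninf (xi, eta) ->
  X_eta n0 n1 ninf (xi, eta) =
  (- (dz_log_power_factor (metric_exponent n0 n1 ninf n0) (metric_exponent n0 n1 ninf n1)
        xi * eta * eta))%C.
Proof.
  intros h0 h1 HS. destruct (S_reg_nonzero _ _ _ _ _ h0 h1 HS) as (Hxi & Hxi1 & Heta).
  destruct HS as [Heq _].
  unfold X_eta, dz_log_power_factor, metric_exponent. cbv beta zeta iota.
  set (N := nsum n0 n1 ninf) in *.
  set (p := (N - n0 - 1)%nat). set (q := (N - n1 - 1)%nat). set (m := (N - 2)%nat).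
  assert (Ep : (N - n0 = S p)%nat) by (unfold p, N, nsum; lia).
  assert (Eq : (N - n1 = S q)%nat) by (unfold q, N, nsum; lia).
  assert (Em : N = S (S m)) by (unfold m, N, nsum; lia).
  assert (Epq : (2 * N - n0 - n1 = S p + S q)%nat) by (unfold p, q, N, nsum; lia).
  rewrite Ep, Eq, Em in Heq. simpl in Heq.
  assert (HN : INR N <> 0) by (rewrite Em; apply not_0_INR; lia).
  assert (Hp : INR (S p) <> 0) by (apply not_0_INR; lia).
  assert (Hm : Cpown eta m <> 0) by (rewrite Cpown_Cpow; apply Cpow_nz, Heta).
  assert (Hq : Cpown (1 - xi) q <> 0) by (rewrite Cpown_Cpow; apply Cpow_nz, Hxi1).
  assert (Exi : Cpown xi p =
                (eta * (eta * Cpown eta m) / (xi * (1 - xi) * Cpown (1 - xi) q))%C)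
    by (rewrite Heq; field; auto).
  rewrite Epq, Ep, Eq, Exi, plus_INR, !RtoC_div, RtoC_plus by auto.
  field. repeat split; auto; intros E; apply RtoC_inj in E; auto.
Qed.

Lemma continuous_C_of_components (z : R -> C) (t : R) :
  continuous (fun s => Re (z s)) t -> continuous (fun s => Im (z s)) t -> continuous z t.
Proof.
  intros Hre Him. apply filterlim_locally. intros eps.
  apply (proj1 (filterlim_locally _ _)) with (eps := eps) in Hre, Him.
  generalize (filter_and _ _ Hre Him). apply filter_imp.
  intros s [Hs1 Hs2]. split; assumption.
Qed.

Theorem corollary5 (n0 n1 ninf : nat) :
  (1 <= n0)%nat -> (n0 <= n1)%nat -> (n1 <= ninf)%nat ->
  forall (gam : R -> C * C) (a b : R),
    is_integral_curve_X n0 n1 ninf gam a b ->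
    is_geodesic_S n0 n1 ninf gam a b.
Proof.
  intros h0 h01 _ gam a b Hint.
  assert (h1 : (1 <= n1)%nat) by lia.
  split; [|split].
  - intros t Ht. apply (Hint t Ht).
  - intros t Ht. destruct (Hint t Ht) as (_ & Hx & Hy & Hu & Hv).
    split; apply continuous_C_of_components;
      apply (@ex_derive_continuous R_AbsRing R_NormedModule); eexists; eassumption.
  - apply (is_geodesic_chart_conformal _
      (dz_log_power_factor (metric_exponent n0 n1 ninf n0) (metric_exponent n0 n1 ninf n1))
      (fun s => fst (gam s)) (fun s => snd (gam s)) (fun s => X_eta n0 n1 ninf (gam s))).
    + intros t Ht. destruct (Hint t Ht) as [HS _]. destruct (gam t) as [xi eta].
      destruct (S_reg_nonzero _ _ _ _ _ h0 h1 HS) as (Hxi & Hxi1 & _).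
      apply (is_dz_log_ext _ _ _ _ (conf_factor_power_factor n0 n1 ninf)).
      apply is_dz_log_power_factor; assumption.
    + intros t Ht k. destruct (Hint t Ht) as (_ & Hx & Hy & Hu & Hv).
      destruct k; split; assumption.
    + intros t Ht. destruct (Hint t Ht) as [HS _]. destruct (gam t) as [xi eta].
      apply X_eta_S_reg; assumption.
Qed.
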